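(* Let $R\subseteq\{0,1\}^V$ be a delta matroid that is not basically binary, but such that every pinning $R_p$ with $\mathrm{dom}(p)\ne\emptyset$ is basically binary. Then there is $h:V\to\mathbb Z$ such that the $h$-maximisation $R_{h\text{-}\max}$ is equivalent (by renaming variables) to a flip $\mathrm{PM}_3^U$ of $\mathrm{PM}_3=\{(0,0,1),(0,1,0),(1,0,0)\}$ for some $U\subseteq\{1,2,3\}$.
   Context: $R$ is a delta matroid if for all $x,y\in R$ and all $i$ with $x_i\ne y_i$ there exists $j$ with $x_j\ne y_j$ (possibly $j=i$) such that $x^{\{i,j\}}\in R$, where $x^U$ is $x$ with coordinates in $U$ flipped. A relation is basically binary if it is equivalent (up to renaming variables) to a Cartesian product of relations of arity at most two. A partial configuration $p$ is an element of $\{0,1\}^{\mathrm{dom}(p)}$ with $\mathrm{dom}(p)\subseteq V$, and $R_p=\{x\in\{0,1\}^{V\setminus\mathrm{dom}(p)}:(x,p)\in R\}$. For $h:V\to\mathbb Z$, $R_{h\text{-}\max}=\{x\in R:\sum_i h_ix_i=\max_{y\in R}\sum_ih_iy_i\}$. The flip of a relation $S$ is $S^U=\{x: x^U\in S\}$. *)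

From HB Require Import structures.
From mathcomp Require Import all_boot all_order all_algebra.
Set Implicit Arguments. Unset Strict Implicit. Unset Printing Implicit Defensive.
Import Order.TTheory GRing.Theory Num.Theory.

(* A Boolean relation on the (finite) variable set V: a subset of {0,1}^V,
   with 0/1 encoded as false/true. *)
Notation relation V := {set {ffun V -> bool}}.

Definition flipc (V : finType) (x : {ffun V -> bool}) (U : {set V}) : {ffun V -> bool} :=
  [ffun v => x v (+) (v \in U)].

Definition flip_rel (V : finType) (S : relation V) (U : {set V}) : relation V :=
  [set x : {ffun V -> bool} | flipc x U \in S].

Definition delta_matroid (V : finType) (R : relation V) : Prop :=
  forall x y, x \in R -> y \in R -> forall i, x i != y i ->
    exists j, x j != y j /\ flipc x [set i; j] \in R.

(* Basically binary: R equals a Cartesian product of relations of arity at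
   most two, i.e. there are pairwise disjoint blocks B_k of size <= 2 covering
   V and relations S_k depending only on the coordinates in B_k, such that
   R is the set of x with x|_{B_k} in S_k for every k. (Factors are given as
   sets of full assignments that only depend on the block coordinates.) *)
Definition basically_binary (V : finType) (R : relation V) : Prop :=
  exists blocks : seq ({set V} * relation V),
    [/\ forall k, k < size blocks -> #|(nth (set0, set0) blocks k).1| <= 2,
        forall k l, k < size blocks -> l < size blocks -> k != l ->
          [disjoint (nth (set0, set0) blocks k).1 & (nth (set0, set0) blocks l).1],
        forall v : V, exists2 b, b \in blocks & v \in b.1,
        forall b, b \in blocks -> forall x y : {ffun V -> bool},
          (forall v, v \in b.1 -> x v = y v) -> (x \in b.2) = (y \in b.2)
      & R = [set x : {ffun V -> bool} | all (fun b : {set V} * relation V => x \in b.2) blocks]].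

(* Pinning R_p, for the partial configuration p with dom(p) = D and values
   given by a on D; R_p is a relation on the variables V \ D. *)
Definition glue (V : finType) (D : {set V}) (a : {ffun V -> bool})
    (y : {ffun {v : V | v \notin D} -> bool}) : {ffun V -> bool} :=
  [ffun v => if insub v is Some u then y u else a v].

Definition pinning (V : finType) (R : relation V) (D : {set V}) (a : {ffun V -> bool})
  : relation {v : V | v \notin D} :=
  [set y : {ffun {v : V | v \notin D} -> bool} | @glue V D a y \in R].

Definition hweight (V : finType) (h : V -> int) (x : {ffun V -> bool}) : int :=
  (\sum_(v : V) h v * (x v)%:R)%R.

Definition hmax (V : finType) (R : relation V) (h : V -> int) : relation V :=
  [set x in R | [forall y in R, (hweight h y <= hweight h x)%R]].

Definition PM3 : relation 'I_3 := [set x : {ffun 'I_3 -> bool} | #|[set i | x i]| == 1].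

Definition equiv_rename (V W : finType) (S : relation V) (T : relation W) : Prop :=
  exists f : W -> V, bijective f /\
    S = [set x : {ffun V -> bool} | [ffun w => x (f w)] \in T].

(* Call i, j coupled in R if some w \in R has w^{i,j} \in R while w^{i} and
   w^{j} are not both in R.  The proof has three parts.

   1. If coupling never forms a path a - b - c with a != c, then R is basically
      binary: every variable has at most one partner, and a separation lemma
      (exchange argument in the delta matroid) shows that R splits along each
      class {v, partner v}, i.e. is the product of its projections on them.
   2. In a basically binary relation a coupled pair is a factor block, so R
      splits along it.  Applied to the pinnings R_p (basically binary by
      hypothesis), this shows that a coupling path a - b - c leaves no fourth
      variable: pinning c and another variable v yields both single flips of
      the coupling witness for {a, b}.
   3. So V = {a, b, c}, and the three-variable case is settled by checking all
      256 relations on three variables: the face maximising the distance from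
      a suitable point z is a flip of PM_3, and that face is R_{h-max} for the
      weight h = +-1 given by z. *)

From HB Require Import structures.
From mathcomp Require Import all_boot all_order all_algebra.
Set Implicit Arguments. Unset Strict Implicit. Unset Printing Implicit Defensive.
Import GRing.Theory Num.Theory.

Section Coupling.
Variable V : finType.
Implicit Types (R : relation V) (X S : {set V}) (x y z w : {ffun V -> bool}).

Definition mix X x z : {ffun V -> bool} := [ffun v => if v \in X then x v else z v].

Definition splits R X := forall x z, x \in R -> z \in R -> mix X x z \in R.

(* The witness w couples i and j in R: w and w^{i,j} lie in R but w^{i} and
   w^{j} do not both lie in R.  Coupled pairs are the obstruction to being
   basically binary. *)
Definition coupled_at R w i j :=
  [&& i != j, w \in R, flipc w [set i; j] \in R &
      ~~ ((flipc w [set i] \in R) && (flipc w [set j] \in R))].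

Definition coupled R i j := [exists w, coupled_at R w i j].

Lemma flipcE x S v : flipc x S v = x v (+) (v \in S).
Proof. by rewrite ffunE. Qed.

Lemma mixE X x z v : mix X x z v = if v \in X then x v else z v.
Proof. by rewrite ffunE. Qed.

Lemma coupled_atC R w i j : coupled_at R w i j -> coupled_at R w j i.
Proof.
case/and4P=> ij wR fR nf; apply/and4P; split => //; first by rewrite eq_sym.
  by rewrite setUC.
by rewrite andbC.
Qed.

Lemma coupledC R i j : coupled R i j -> coupled R j i.
Proof. by case/existsP => w /coupled_atC c; apply/existsP; exists w. Qed.

Definition closed_across R X := forall w i j, w \in R -> i \in X -> j \notin X ->
  flipc w [set i; j] \in R -> flipc w [set i] \in R.

Definition diffs X x z := [set i in X | x i != z i].

Lemma diffs_flip X S x z : S \subset diffs X x z ->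
  diffs X x (flipc z S) = diffs X x z :\: S.
Proof.
move/subsetP=> sS; apply/setP => v; rewrite !inE flipcE.
case: (boolP (v \in S)) => [/sS|_]; last by rewrite addbF.
by rewrite inE => /andP[-> /negPf xz]; rewrite addbT; case: (x v) (z v) xz => [] [].
Qed.

Lemma exchange_step R X x z i : delta_matroid R -> closed_across R X ->
  x \in R -> z \in R -> i \in diffs X x z ->
  exists2 S : {set V}, i \in S & S \subset diffs X x z /\ flipc z S \in R.
Proof.
move=> dm cross xR zR iD; have := iD; rewrite inE => /andP[iX xzi].
have zxi : z i != x i by rewrite eq_sym.
have [j [zxj fR]] := dm z x zR xR i zxi.
have [jX|jX] := boolP (j \in X).
- exists [set i; j]; first by rewrite !inE eqxx.
  split=> //; apply/subsetP => v; rewrite !inE => /orP[]/eqP->; first by rewrite iX.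
  by rewrite jX eq_sym.
- exists [set i]; first by rewrite inE.
  by split; [rewrite sub1set | exact: cross fR].
Qed.

Lemma splits_of_closed_across R X : delta_matroid R -> closed_across R X -> splits R X.
Proof.
move=> dm cross x z xR; move: {2}#|diffs X x z| (leqnn #|diffs X x z|) => n.
elim: n z => [|n IH] z Hn zR.
  suff -> : mix X x z = z by [].
  apply/ffunP => v; rewrite mixE; case: ifP => // vX; apply/eqP; apply: contraT => xz.
  by move: Hn; rewrite leqn0 cards_eq0 => /eqP/setP/(_ v); rewrite !inE vX xz.
have [le_n|lt_n] := leqP #|diffs X x z| n; first exact: IH.
have /set0Pn[i iD] : diffs X x z != set0 by rewrite -card_gt0 (leq_ltn_trans _ lt_n).
have [S iS [sD fR]] := exchange_step dm cross xR zR iD.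
have -> : mix X x z = mix X x (flipc z S).
  apply/ffunP => v; rewrite !mixE flipcE; case: ifP => // vX.
  have /negPf -> : v \notin S by apply: contraFN vX => /(subsetP sD); rewrite inE => /andP[].
  by rewrite addbF.
apply: IH fR; rewrite diffs_flip // -ltnS (leq_trans _ Hn) //.
by rewrite (cardsD1 i (diffs X x z)) iD add1n ltnS subset_leq_card // setDS // sub1set.
Qed.

Lemma splits_coupled R B w p q : splits R B -> coupled_at R w p q -> q \in B -> p \in B.
Proof.
move=> sep /and4P[pq wR fR nf] qB; apply: contraT => pB.
case/nandP: nf => /negP[].
- suff -> : flipc w [set p] = mix B w (flipc w [set p; q]) by apply: sep.
  apply/ffunP => v; rewrite mixE !flipcE !inE.
  case: ifP => vB; last by case: (v =P q) => [ev|]; [rewrite ev qB in vB | rewrite orbF].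
  by case: (v =P p) => [ev|]; [rewrite -ev vB in pB | rewrite addbF].
- suff -> : flipc w [set q] = mix B (flipc w [set p; q]) w by apply: sep.
  apply/ffunP => v; rewrite mixE !flipcE !inE.
  case: ifP => vB; first by case: (v =P p) => [ev|//]; rewrite -ev vB in pB.
  by case: (v =P q) => [ev|]; [rewrite ev qB in vB | rewrite addbF].
Qed.

Lemma product_splits R (bl : seq ({set V} * relation V)) b :
  (forall k l, k < size bl -> l < size bl -> k != l ->
     [disjoint (nth (set0, set0) bl k).1 & (nth (set0, set0) bl l).1]) ->
  (forall b, b \in bl -> forall x y : {ffun V -> bool},
     (forall v, v \in b.1 -> x v = y v) -> (x \in b.2) = (y \in b.2)) ->
  R = [set x : {ffun V -> bool} | all (fun b : {set V} * relation V => x \in b.2) bl] ->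
  b \in bl -> splits R b.1.
Proof.
move=> disj local -> bin x z; rewrite !inE => /allP Hx /allP Hz.
apply/allP => b' b'in.
have [eb|neb] := eqVneq b b'.
  by rewrite -eb (local b bin _ x) ?Hx // => v vb; rewrite mixE vb.
have kb : index b bl < size bl by rewrite index_mem.
have kb' : index b' bl < size bl by rewrite index_mem.
have /(disj _ _ kb kb') : index b bl != index b' bl.
  by apply: contra neb => /eqP e; rewrite -(nth_index (set0, set0) bin) e nth_index.
rewrite !nth_index // => /pred0P dj.
rewrite (local b' b'in _ z) ?Hz // => v vb'; rewrite mixE; case: ifP => // vb.
by move: (dj v); rewrite /= vb vb'.
Qed.

(* In a basically binary relation a coupled pair {i, j} is a whole factor
   block (blocks have at most two elements), so the relation splits along it. *)
Lemma bb_splits_coupled T w i j : basically_binary T -> coupled_at T w i j ->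
  splits T [set i; j].
Proof.
move=> [bl [small disj cover local ->]] cw.
have [b bin jb] := cover j.
have sepb := product_splits disj local (erefl _) bin.
have ib : i \in b.1 := splits_coupled sepb cw jb.
have ij : i != j by case/and4P: cw.
suff <- : b.1 = [set i; j] by [].
apply/eqP; rewrite eq_sym eqEcard; apply/andP; split.
  by apply/subsetP => v; rewrite !inE => /orP[]/eqP->.
have := small (index b bl); rewrite index_mem bin nth_index // => /(_ isT).
by rewrite cards2 ij.
Qed.
End Coupling.

(* If coupling never forms a path a - b - c with a != c, the coupling classes
   {v} U {partner of v} have size at most two and R is the product of its
   projections onto them, so R is basically binary. *)
Section NoCouplingPath.
Variables (V : finType) (R : relation V).
Hypothesis dm : delta_matroid R.
Hypothesis no_path : forall a b c, coupled R a b -> coupled R b c -> a = c.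
Implicit Types (B : {set V}) (x y z : {ffun V -> bool}).

Definition cls (v : V) : {set V} := [set u | (u == v) || coupled R v u].

Definition proj B : relation V :=
  [set x : {ffun V -> bool} | [exists y in R, [forall u in B, x u == y u]]].

(* The factor blocks; the empty block makes the product empty when R is. *)
Definition classes : seq {set V} := set0 :: [seq cls v | v <- enum V].

Lemma partner_uniq v u1 u2 : coupled R v u1 -> coupled R v u2 -> u1 = u2.
Proof. by move/coupledC; apply: no_path. Qed.

Lemma cls_self v : v \in cls v.
Proof. by rewrite inE eqxx. Qed.

Lemma cls_same v u : u \in cls v -> cls v = cls u.
Proof.
rewrite inE => /orP[/eqP->//|cvu]; apply/setP => t; rewrite !inE.
apply/idP/idP => [/orP[/eqP->|cvt]|/orP[/eqP->|cut]].
- by rewrite (coupledC cvu) orbT.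
- by rewrite (partner_uniq cvu cvt) eqxx.
- by rewrite cvu orbT.
- by rewrite (no_path cvu cut) eqxx.
Qed.

Lemma cls_card v : #|cls v| <= 2.
Proof.
case: (pickP (coupled R v)) => [u cu|nc].
  have /subset_leq_card/leq_trans -> // : cls v \subset [set v; u].
    by apply/subsetP => t; rewrite !inE => /orP[->//|/(partner_uniq cu)->]; rewrite eqxx orbT.
  by rewrite cards2; case: (v != u).
have /subset_leq_card : cls v \subset [set v] by apply/subsetP => t; rewrite !inE nc orbF.
by rewrite cards1 => /leq_trans; apply.
Qed.

Lemma classes_splits B : B \in classes -> splits R B.
Proof.
rewrite inE => /orP[/eqP-> x z _ zR|/mapP[v _ ->]].
  by have -> : mix set0 x z = z by apply/ffunP => u; rewrite mixE inE.
apply: splits_of_closed_across => // w i j wR iP jP fR; apply: contraT => nfi.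
have cij : coupled R i j.
  apply/existsP; exists w; apply/and4P; split => //; last by rewrite (negPf nfi).
  by apply: contraNneq jP => <-.
by move: jP; rewrite (cls_same iP) inE cij orbT.
Qed.

Lemma classes_disjoint B1 B2 : B1 \in classes -> B2 \in classes -> B1 != B2 ->
  [disjoint B1 & B2].
Proof.
rewrite !inE => /orP[/eqP->|/mapP[v _ ->]]; first by rewrite -setI_eq0 set0I.
case/orP=> [/eqP->|/mapP[u _ ->]] ne; first by rewrite -setI_eq0 setI0.
apply/pred0P => t /=; apply/negbTE/andP => -[tv tu].
by move: ne; rewrite (cls_same tv) (cls_same tu) eqxx.
Qed.

Lemma proj_glue x (s : seq {set V}) : {subset s <= classes} ->
  (forall B, B \in classes -> x \in proj B) ->
  exists2 z, z \in R & forall B, B \in s -> forall u, u \in B -> z u = x u.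
Proof.
move=> sub inproj; elim: s sub => [_|B s IH /allP/= /andP[Bc /allP sub]].
  have := inproj set0; rewrite inE eqxx => /(_ isT); rewrite inE => /existsP[z /andP[zR _]].
  by exists z.
have [z zR agz] := IH sub.
have := inproj B Bc; rewrite inE => /existsP[y /andP[yR /forallP ag]].
exists (mix B y z); first exact: classes_splits.
move=> B'; rewrite inE => /orP[/eqP-> u uB|B's u uB'].
  by rewrite mixE uB; move/implyP: (ag u) => /(_ uB)/eqP.
rewrite mixE; case: ifP => [uB|_]; last exact: agz B's u uB'.
by move/implyP: (ag u) => /(_ uB)/eqP.
Qed.

Definition blocks := undup [seq (B, proj B) | B <- classes].

Lemma blocksP b : b \in blocks -> exists2 B, B \in classes & b = (B, proj B).
Proof. by rewrite mem_undup => /mapP[B Bc ->]; exists B. Qed.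

Lemma bb_of_no_path : basically_binary R.
Proof.
exists blocks; split.
- move=> k /(mem_nth (set0, set0)) /blocksP[B] /=.
  by rewrite inE => /orP[/eqP->|/mapP[v _ ->]] ->; rewrite ?cards0 ?cls_card.
- move=> k l ks ls kl.
  have ne : nth (set0, set0) blocks k != nth (set0, set0) blocks l.
    by rewrite nth_uniq ?undup_uniq.
  have /blocksP[B1 B1c e1] := mem_nth (set0, set0) ks.
  have /blocksP[B2 B2c e2] := mem_nth (set0, set0) ls.
  rewrite e1 e2 /= in ne *; apply: classes_disjoint => //.
  by apply: contraNneq ne => ->.
- move=> v; exists (cls v, proj (cls v)); last exact: cls_self.
  by rewrite mem_undup; apply: map_f; rewrite inE map_f ?orbT ?mem_enum.
- move=> b /blocksP[B _ ->] x y /= xy; rewrite !inE.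
  by apply: eq_existsb => t; congr (_ && _); apply: eq_forallb => u; case: (boolP (u \in B)) => //= /xy->.
apply/setP => x; rewrite inE; apply/idP/allP => [xR b /blocksP[B _ ->]|inb].
  by rewrite inE; apply/existsP; exists x; rewrite xR; apply/forallP => u; apply/implyP.
have inproj B : B \in classes -> x \in proj B.
  by move=> Bc; apply: (inb (B, proj B)); rewrite mem_undup map_f.
have [z zR agz] := proj_glue (fun B (h : B \in classes) => h) inproj.
suff <- : z = x by [].
apply/ffunP => u; apply: (agz (cls u)) (cls_self u).
by rewrite inE map_f ?orbT ?mem_enum.
Qed.
End NoCouplingPath.

Section Pinning.
Variables (V : finType) (R : relation V) (D : {set V}) (p : {ffun V -> bool}).
Implicit Types (S : {set V}) (x z w : {ffun V -> bool}).

Definition agree x := forall v, v \in D -> x v = p v.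

Definition restr x : {ffun {v : V | v \notin D} -> bool} := [ffun u => x (val u)].

Definition lift_set S : {set {v : V | v \notin D}} := [set u | val u \in S].

Lemma pin_mem x : agree x -> (restr x \in pinning R D p) = (x \in R).
Proof.
move=> ax; rewrite inE; congr (_ \in R); apply/ffunP => v; rewrite /glue ffunE.
case: insubP => [u _ <-|vD]; first by rewrite ffunE.
by rewrite ax //; move/negPn: vD.
Qed.

Lemma restr_flip S x : restr (flipc x S) = flipc (restr x) (lift_set S).
Proof. by apply/ffunP => u; rewrite !ffunE inE. Qed.

Lemma restr_mix S x z : restr (mix S x z) = mix (lift_set S) (restr x) (restr z).
Proof. by apply/ffunP => u; rewrite !ffunE inE. Qed.

Lemma agree_flip S x : [disjoint S & D] -> agree x -> agree (flipc x S).
Proof.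
move=> SD ax v vD; rewrite flipcE ax //.
case: (boolP (v \in S)) => [vS|_]; last by rewrite addbF.
by rewrite (disjointFr SD vS) in vD.
Qed.

Lemma agree_mix S x z : agree x -> agree z -> agree (mix S x z).
Proof. by move=> ax az v vD; rewrite mixE; case: ifP => _; [apply: ax | apply: az]. Qed.

Lemma lift_set1 a (Ha : a \notin D) : lift_set [set a] = [set exist _ a Ha].
Proof. by apply/setP => u; rewrite !inE -val_eqE. Qed.

Lemma lift_set2 a b (Ha : a \notin D) (Hb : b \notin D) :
  lift_set [set a; b] = [set exist _ a Ha; exist _ b Hb].
Proof. by apply/setP => u; rewrite !inE -!val_eqE. Qed.

Lemma disjoint_set1 a : a \notin D -> [disjoint [set a] & D].
Proof. by rewrite disjoints1. Qed.

Lemma disjoint_set2 a b : a \notin D -> b \notin D -> [disjoint [set a; b] & D].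
Proof. by move=> aD bD; rewrite disjoints_subset subUset !sub1set !inE aD bD. Qed.

Lemma coupled_at_restr w a b (Ha : a \notin D) (Hb : b \notin D) :
  agree w -> coupled_at R w a b ->
  coupled_at (pinning R D p) (restr w) (exist _ a Ha) (exist _ b Hb).
Proof.
move=> aw /and4P[ab wR fR nf]; apply/and4P; split.
- by rewrite -val_eqE.
- by rewrite pin_mem.
- by rewrite -lift_set2 -restr_flip pin_mem //; apply: agree_flip; rewrite ?disjoint_set2.
- by rewrite -lift_set1 -(lift_set1 Hb) -!restr_flip !pin_mem //;
    apply: agree_flip; rewrite ?disjoint_set1.
Qed.

Hypothesis bbp : basically_binary (pinning R D p).

Lemma pin_splits w a b : a \notin D -> b \notin D -> coupled_at R w a b -> agree w ->
  forall x z, x \in R -> z \in R -> agree x -> agree z -> mix [set a; b] x z \in R.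
Proof.
move=> Ha Hb cw aw x z xR zR ax az.
have sep := bb_splits_coupled bbp (coupled_at_restr Ha Hb aw cw).
rewrite -(pin_mem (agree_mix _ ax az)) restr_mix lift_set2.
by apply: sep; rewrite pin_mem.
Qed.
End Pinning.

Section CouplingPath.
Variables (V : finType) (R : relation V).
Hypothesis pin_bb : forall (D : {set V}) (p : {ffun V -> bool}),
  D != set0 -> basically_binary (pinning R D p).
Implicit Types (x y z w : {ffun V -> bool}) (u v : V).

Lemma agree1 u (p : {ffun V -> bool}) x : x u = p u -> agree [set u] p x.
Proof. by move=> e v; rewrite inE => /eqP->. Qed.

Lemma pin1_splits u w a b x z : a != u -> b != u -> coupled_at R w a b ->
  x \in R -> z \in R -> x u = w u -> z u = w u -> mix [set a; b] x z \in R.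
Proof.
move=> au bu cw xR zR xu zu.
have bbu : basically_binary (pinning R [set u] w).
  by apply: pin_bb; apply/set0Pn; exists u; rewrite inE.
have nu t : t \in [set a; b] -> t \notin [set u].
  by rewrite !inE => /orP[]/eqP->.
apply: (pin_splits bbu (nu a _) (nu b _) cw (@agree1 u w w erefl)) xR zR _ _;
  by rewrite ?inE ?eqxx ?orbT //; apply: agree1.
Qed.

(* With a coupling path a - b - c there is no variable v off the path: pinning
   c, resp. v, lets R split along {a, b}, resp. {b, c}, near w1; mixing then
   produces w1^{a} and w1^{b} in R, contradicting the coupling of a and b. *)
Lemma no_fourth_variable w1 w2 a b c v :
  coupled_at R w1 a b -> coupled_at R w2 b c -> a != c ->
  [&& v != a, v != b & v != c] -> False.
Proof.
move=> c1 c2 ac /and3P[va vb vc].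
have [ab w1R f1R nf] := and4P c1; have [bc w2R f2R _] := and4P c2.
have neq := (negPf ab, negPf bc, negPf ac, negPf va, negPf vb, negPf vc).
have sepC := pin1_splits ac bc c1.
have [bv cv] : b != v /\ c != v by rewrite eq_sym vb eq_sym vc.
have sepV := pin1_splits bv cv c2.
(* y \in R agrees with w1 at c and with w2 at v *)
pose y := if w2 c == w1 c then w2 else flipc w2 [set b; c].
have yR : y \in R by rewrite /y; case: ifP.
have yc : y c = w1 c.
  rewrite /y; case: eqP => // /eqP; rewrite flipcE !inE eqxx orbT.
  by case: (w1 c); case: (w2 c).
have yv : y v = w2 v.
  by rewrite /y; case: ifP => // _; rewrite flipcE !inE !neq addbF.
pose m1 := mix [set a; b] w1 y; pose m2 := mix [set a; b] (flipc w1 [set a; b]) y.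
have m1R : m1 \in R by apply: sepC.
have m2R : m2 \in R by apply: sepC; rewrite // flipcE !inE eq_sym (negPf ac) eq_sym !neq addbF.
have m1v : m1 v = w2 v by rewrite mixE !inE !neq.
have m2v : m2 v = w2 v by rewrite mixE !inE !neq.
have m1c : m1 c = w1 c by rewrite mixE !inE eq_sym (negPf ac) eq_sym (negPf bc).
have m2c : m2 c = w1 c by rewrite mixE !inE eq_sym (negPf ac) eq_sym (negPf bc).
case/nandP: nf => /negP[].
- have -> : flipc w1 [set a] = mix [set a; b] (mix [set b; c] m1 m2) w1.
    apply/ffunP => u; rewrite !mixE !flipcE !inE.
    by case: (u =P a) => [->|_]; [|case: (u =P b) => [->|_]]; rewrite ?eqxx ?neq /= ?addbF.
  by apply: sepC => //; [apply: sepV | rewrite mixE !inE eqxx orbT].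
- have -> : flipc w1 [set b] = mix [set a; b] (mix [set b; c] m2 m1) w1.
    apply/ffunP => u; rewrite !mixE !flipcE !inE.
    by case: (u =P a) => [->|_]; [|case: (u =P b) => [->|_]]; rewrite ?eqxx ?neq /= ?addbF.
  by apply: sepC => //; [apply: sepV | rewrite mixE !inE eqxx orbT].
Qed.
End CouplingPath.

(* The three-variable case is decided by computation.  A relation on three
   variables is encoded as a predicate on bool triples; [certificate r] says
   that if r is a delta matroid in which 0, 1 and 1, 2 are coupled, then for
   some z the configurations of r farthest from z are exactly those at
   Hamming distance one from some u, i.e. form a flip of PM_3. *)
Definition triple := (bool * bool * bool)%type.

Definition triples : seq triple :=
  [:: (false, false, false); (false, false, true); (false, true, false);
      (false, true, true); (true, false, false); (true, false, true);
      (true, true, false); (true, true, true)].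

Definition coords : seq nat := [:: 0; 1; 2].

Definition coord (x : triple) (i : nat) : bool :=
  match i with 0 => x.1.1 | 1 => x.1.2 | _ => x.2 end.

Definition flip1 (x : triple) (i : nat) : triple :=
  match i with
  | 0 => (~~ x.1.1, x.1.2, x.2)
  | 1 => (x.1.1, ~~ x.1.2, x.2)
  | _ => (x.1.1, x.1.2, ~~ x.2)
  end.

Definition flip2 (x : triple) (i j : nat) : triple :=
  if i == j then flip1 x i else flip1 (flip1 x i) j.

Definition delta_matroid3 (r : triple -> bool) :=
  all (fun x => all (fun y => r x ==> r y ==> all (fun i => (coord x i != coord y i) ==>
    has (fun j => (coord x j != coord y j) && r (flip2 x i j)) coords) coords) triples) triples.

Definition coupled3 (r : triple -> bool) i j :=
  has (fun w => [&& r w, r (flip2 w i j) & ~~ (r (flip1 w i) && r (flip1 w j))]) triples.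

Definition dist3 (z x : triple) := count (fun i => coord x i != coord z i) coords.

Definition farthest3 (r : triple -> bool) z x :=
  r x && all (fun y => r y ==> (dist3 z y <= dist3 z x)) triples.

Definition certificate (r : triple -> bool) :=
  delta_matroid3 r ==> coupled3 r 0 1 ==> coupled3 r 1 2 ==>
  has (fun z => has (fun u =>
    all (fun x => farthest3 r z x == (dist3 u x == 1)) triples) triples) triples.

(* The relation whose truth table, listed in the order of [triples], is s. *)
Definition rel_of (s : seq bool) (x : triple) : bool :=
  nth false s (4 * x.1.1 + 2 * x.1.2 + x.2).

Fixpoint truth_tables (n : nat) : seq (seq bool) :=
  if n is n'.+1 then [seq b :: s | b <- [:: false; true], s <- truth_tables n']
  else [:: [::]].

Lemma certificate_all_tables : all (fun s => certificate (rel_of s)) (truth_tables 8).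
Proof. by vm_compute. Qed.

Lemma mem_truth_tables (s : seq bool) : s \in truth_tables (size s).
Proof.
elim: s => [|b s IH] //=.
by case: b; rewrite /= !mem_cat ?(map_f (cons true) IH) ?(map_f (cons false) IH) ?orbT.
Qed.

Lemma rel_of_map (f : triple -> bool) x : rel_of (map f triples) x = f x.
Proof. by case: x => [[[] []] []]. Qed.

Lemma certificate_rel_of (f : triple -> bool) : certificate (rel_of (map f triples)).
Proof. exact: (allP certificate_all_tables _ (mem_truth_tables (map f triples))). Qed.

Lemma mem_triples (x : triple) : x \in triples.
Proof. by case: x => [[[] []] []]. Qed.

Lemma card_ord3 (P : nat -> bool) : #|[set i : 'I_3 | P i]| = count P coords.
Proof.
rewrite cardsE cardE /enum_mem size_filter -enumT -[coords](val_enum_ord 3) count_map.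
by apply: eq_count => i; rewrite /= ?inE.
Qed.

Section ThreeVariables.
Variables (V : finType) (R : relation V) (a b c : V).
Hypotheses (ab : a != b) (bc : b != c) (ac : a != c).
Hypothesis cover : forall u, [|| u == a, u == b | u == c].
Implicit Types (x y w : {ffun V -> bool}) (t : triple).

Definition var3 (i : nat) : V := match i with 0 => a | 1 => b | _ => c end.

Definition index3 (u : V) : nat := if u == a then 0 else if u == b then 1 else 2.

Definition triple_of x : triple := (x a, x b, x c).

Definition rel3 : triple -> bool :=
  rel_of [seq [exists x in R, triple_of x == t] | t <- triples].

Lemma neq3 : ((a == b) = false) * ((b == a) = false) * ((a == c) = false) *
  ((c == a) = false) * ((b == c) = false) * ((c == b) = false).
Proof. by rewrite ![_ == a]eq_sym ![c == b]eq_sym !(negPf ab, negPf bc, negPf ac). Qed.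

Lemma var3_index3 u : var3 (index3 u) = u.
Proof. by rewrite /index3; case/or3P: (cover u) => /eqP ->; rewrite ?eqxx ?neq3. Qed.

Lemma index3_var3 i : i < 3 -> index3 (var3 i) = i.
Proof. by case: i => [|[|[|i]]] //= _; rewrite /index3 ?eqxx ?neq3. Qed.

Lemma index3_in u : index3 u \in coords.
Proof. by rewrite /index3; case: ifP => //; case: ifP. Qed.

Lemma coord_triple_of x i : coord (triple_of x) i = x (var3 i).
Proof. by case: i => [|[|i]]. Qed.

Lemma triple_of_inj x y : triple_of x = triple_of y -> x = y.
Proof. by case=> ea eb ec; apply/ffunP => u; case/or3P: (cover u) => /eqP ->. Qed.

Lemma rel3_triple_of x : rel3 (triple_of x) = (x \in R).
Proof.
rewrite /rel3 rel_of_map; apply/existsP/idP => [[y /andP[yR /eqP e]]|xR].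
  by rewrite -(triple_of_inj e).
by exists x; rewrite xR eqxx.
Qed.

Lemma rel3P t : rel3 t -> exists2 x, x \in R & triple_of x = t.
Proof. by rewrite /rel3 rel_of_map => /existsP[x /andP[xR /eqP e]]; exists x. Qed.

Lemma triple_of_flip1 x i : i \in coords -> triple_of (flipc x [set var3 i]) = flip1 (triple_of x) i.
Proof.
by rewrite !inE => /or3P[]/eqP->; rewrite /triple_of !flipcE !inE ?eqxx ?neq3 /= ?addbT ?addbF.
Qed.

Lemma triple_of_flip2 x i j : i \in coords -> j \in coords ->
  triple_of (flipc x [set var3 i; var3 j]) = flip2 (triple_of x) i j.
Proof.
rewrite !inE => /or3P[]/eqP-> /or3P[]/eqP->;
by rewrite /flip2 /triple_of !flipcE !inE ?eqxx ?neq3 /= ?addbT ?addbF.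
Qed.

Lemma delta_matroid_rel3 : delta_matroid R -> delta_matroid3 rel3.
Proof.
move=> dm; apply/allP => s _; apply/allP => t _.
apply/implyP => /rel3P[x xR <-]; apply/implyP => /rel3P[y yR <-].
apply/allP => i iI; apply/implyP; rewrite !coord_triple_of => /(dm x y xR yR)[j [xyj fR]].
apply/hasP; exists (index3 j); first exact: index3_in.
by rewrite !coord_triple_of var3_index3 xyj -triple_of_flip2 ?index3_in // var3_index3 rel3_triple_of.
Qed.

Lemma coupled_rel3 w i j : i \in coords -> j \in coords ->
  coupled_at R w (var3 i) (var3 j) -> coupled3 rel3 i j.
Proof.
move=> iI jI /and4P[_ wR fR nf]; apply/hasP; exists (triple_of w); first exact: mem_triples.
by rewrite rel3_triple_of wR -triple_of_flip2 // rel3_triple_of fR -!triple_of_flip1 // !rel3_triple_of.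
Qed.

(* The weight -1 on the coordinates where z is 1 and +1 elsewhere measures the
   Hamming distance from z, up to a constant. *)
Definition sign_weight (z : triple) (v : V) : int := (if coord z (index3 v) then -1 else 1)%R.

Lemma sum3 (F : V -> int) : (\sum_(v : V) F v = F a + F b + F c)%R.
Proof.
rewrite (bigD1 a) //= (bigD1 b) ?neq3 //= (bigD1 c) ?neq3 //= big_pred0 ?addr0 ?addrA //.
by move=> u; apply/negbTE; case/or3P: (cover u) => /eqP->; rewrite ?eqxx ?neq3 //= ?andbF.
Qed.

Lemma hweight_sign z x :
  hweight (sign_weight z) x = ((dist3 z (triple_of x))%:R - (count (coord z) coords)%:R)%R.
Proof.
rewrite /hweight sum3 /sign_weight /index3 !eqxx !neq3 /dist3 /=.
by case: (x a); case: (x b); case: (x c); case: z => [[[] []] []].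
Qed.

Lemma hmax_farthest z x : (x \in hmax R (sign_weight z)) = farthest3 rel3 z (triple_of x).
Proof.
rewrite inE /farthest3 rel3_triple_of; congr (_ && _).
apply/forallP/allP => [max_x t _|max_x y].
- apply/implyP => /rel3P[y yR <-]; have := max_x y.
  by rewrite yR /= !hweight_sign lerD2r ler_nat.
- apply/implyP => yR; have := max_x (triple_of y) (mem_triples _).
  by rewrite rel3_triple_of yR /= !hweight_sign lerD2r ler_nat.
Qed.

Lemma hmax_rename z u : all (fun t => farthest3 rel3 z t == (dist3 u t == 1)) triples ->
  equiv_rename (hmax R (sign_weight z)) (flip_rel PM3 [set i : 'I_3 | coord u i]).
Proof.
move=> face; exists (fun i : 'I_3 => var3 i); split.
  exists (fun v => inord (index3 v) : 'I_3).
    by move=> i; apply: val_inj; rewrite /= index3_var3 // inordK.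
  by move=> v; rewrite /= inordK ?var3_index3 //; have := index3_in v; rewrite !inE => /or3P[]/eqP->.
apply/setP => x; rewrite (hmax_farthest z x) (eqP (allP face _ (mem_triples _))) !inE.
rewrite /dist3 -card_ord3; congr (_ == 1); apply: eq_card => i.
by rewrite !inE !ffunE inE coord_triple_of; case: (x (var3 i)); case: (coord u i).
Qed.

Lemma three_variables w1 w2 : delta_matroid R ->
  coupled_at R w1 a b -> coupled_at R w2 b c ->
  exists (h : V -> int) (U : {set 'I_3}), equiv_rename (hmax R h) (flip_rel PM3 U).
Proof.
move=> dm c1 c2.
have := certificate_rel_of (fun t => [exists x in R, triple_of x == t]).
rewrite -/rel3 /certificate delta_matroid_rel3 // (@coupled_rel3 w1 0 1) //.
rewrite (@coupled_rel3 w2 1 2) // => /hasP[z _ /hasP[u _ face]].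
by exists (sign_weight z), [set i : 'I_3 | coord u i]; apply: hmax_rename.
Qed.
End ThreeVariables.

Theorem mainTheorem13 (V : finType) (R : relation V) :
  delta_matroid R ->
  ~ basically_binary R ->
  (forall (D : {set V}) (a : {ffun V -> bool}),
      D != set0 -> basically_binary (pinning R D a)) ->
  exists (h : V -> int) (U : {set 'I_3}),
    equiv_rename (hmax R h) (flip_rel PM3 U).
Proof.
move=> dm not_bb pin_bb.
pose has_path := [exists a, exists b, exists c, [&& coupled R a b, coupled R b c & a != c]].
(* Without a coupling path, R would be basically binary. *)
have /existsP[a /existsP[b /existsP[c]]] : has_path.
  apply: contraT => no_path; case: not_bb; apply: bb_of_no_path => // a b c cab cbc.
  apply/eqP; apply: contraNT no_path => ac.
  by apply/existsP; exists a; apply/existsP; exists b; apply/existsP; exists c; rewrite cab cbc.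
case/and3P=> /existsP[w1 c1] /existsP[w2 c2] ac.
have cover u : [|| u == a, u == b | u == c].
  by apply: contraT; rewrite !negb_or => off; case: (no_fourth_variable pin_bb c1 c2 ac off).
have [ab _ _ _] := and4P c1; have [bc _ _ _] := and4P c2.
by apply: (three_variables ab bc ac cover dm c1 c2).
Qed.
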